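(* Let $q$ be a power of an odd prime and let $n$ be a positive integer with $\gcd\big(n,\frac{q-1}{2}\big)=1$. Then the number of elements $a\in\mathbb{F}_q$ for which the binomial $x^n\big(x^{\frac{q-1}{2}}+a\big)$ is a permutation polynomial of $\mathbb{F}_q$ equals $$\frac{q-2+(-1)^n}{2}.$$
   Context: A polynomial $f\in\mathbb{F}_q[x]$ is a permutation polynomial of $\mathbb{F}_q$ if the map $c\mapsto f(c)$ is a bijection of $\mathbb{F}_q$. *)

From HB Require Import structures.
From mathcomp Require Import all_boot all_order all_algebra all_field.
Set Implicit Arguments. Unset Strict Implicit. Unset Printing Implicit Defensive.
Import GRing.Theory.
Local Open Scope ring_scope.

(* A polynomial f over a finite field F is a permutation polynomial of F
   if c |-> f(c) is a bijection of F, i.e. has a two-sided inverse map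
   (boolean form, since F is finite, so it can be counted). *)
Definition perm_polyb (F : finFieldType) (f : {poly F}) : bool :=
  [exists g : {ffun F -> F}, [forall c, (g f.[c] == c) && (f.[g c] == c)]].

From HB Require Import structures.
From mathcomp Require Import all_boot all_order all_algebra all_field.
From mathcomp Require Import ring zify.
Import GRing.Theory.
Local Open Scope ring_scope.

Set Implicit Arguments. Unset Strict Implicit.

(* Write q = #|F| = 2m + 1 and f_a(c) = c^n (c^m + a).  For x != 0 the power
   x^m is the quadratic character of x, i.e. +1 or -1, each value being taken
   m times.

   Since f_a(c)^m = (c^m)^n (c^m + a)^m, the map f_a
   sends the class {c^m = 1} into {y^m = (a+1)^m} and the class {c^m = -1}
   into {y^m = (-1)^n (a-1)^m}; on each class it is injective because
   c |-> c^n is injective on a fibre of c |-> c^m when gcd(n, m) = 1.  A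
   cardinality argument shows the converse, so f_a permutes F iff a <> +-1
   and these two class values differ, i.e. iff (a^2 - 1)^m = -(-1)^n.

   The conic b^2 = a^2 - 1 has q - 1 = 2m points (it is
   parametrised by u |-> ((u + 1/u)/2, (u - 1/u)/2), u != 0).  Counting its
   points fibrewise with Euler's criterion #{b | b^2 = x} = [x = 0] + 2[x^m = 1]
   gives #{a | (a^2-1)^m = 1} = m - 1 and #{a | (a^2-1)^m = -1} = m, and the
   theorem follows by distinguishing the parity of n. *)

Lemma sum_nat_pred_card (T : finType) (P : pred T) :
  (\sum_(x : T) (P x : nat) = #|[set x | P x]|)%N.
Proof.
rewrite -sum1dep_card [RHS]big_mkcond /=.
by apply: eq_bigr => x _; case: (P x).
Qed.

Lemma card_roots_binomial_le (R : finIdomainType) (m : nat) (c : R) :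
  (0 < m)%N -> (#|[set x : R | x ^+ m == c]| <= m)%N.
Proof.
move=> m_gt0.
have nz_p : ('X^m - c%:P : {poly R}) != 0.
  by rewrite -size_poly_eq0 size_XnsubC.
have := max_poly_roots nz_p (rs := enum [set x : R | x ^+ m == c]).
rewrite size_XnsubC // -cardE ltnS; apply; last exact: enum_uniq.
apply/allP => x; rewrite mem_enum inE => /eqP xm_c.
by rewrite rootE !hornerE xm_c subrr.
Qed.

(* If gcd(n, m) = 1, a nonzero element is determined by its n-th and m-th
   powers (by Bezout, k n = 1 + u m for some u, k). *)
Lemma expf_coprime_inj (K : fieldType) (n m : nat) (c d : K) :
  (0 < n)%N -> coprime n m -> c != 0 ->
  c ^+ n = d ^+ n -> c ^+ m = d ^+ m -> c = d.
Proof.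
move=> n_gt0 co_nm c_nz eq_n eq_m.
have [u _] := Bezoutl m n_gt0; rewrite (eqP co_nm) => /dvdnP[k bezout].
have split_pow (x : K) : x * (x ^+ m) ^+ u = (x ^+ n) ^+ k.
  by rewrite -!exprM -exprS -add1n (mulnC m u) bezout mulnC.
apply: (mulIf (expf_neq0 u (expf_neq0 m c_nz))).
by rewrite split_pow eq_n -split_pow eq_m.
Qed.

Lemma perm_polybP (F : finFieldType) (f : {poly F}) :
  reflect (injective (fun c => f.[c])) (perm_polyb f).
Proof.
apply: (iffP existsP) => [[g /forallP inv_g] x y /= fx_fy | inj_f].
  by rewrite -(eqP (andP (inv_g x)).1) fx_fy (eqP (andP (inv_g y)).1).
have [g fK gK] := injF_bij inj_f.
by exists [ffun c => g c]; apply/forallP => c; rewrite !ffunE fK gK !eqxx.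
Qed.

Section OddOrderField.

Variables (F : finFieldType) (m : nat).
Hypothesis card_F : #|F| = (2 * m).+1.

Lemma half_order_gt0 : (0 < m)%N.
Proof. by have := finNzRing_gt1 F; rewrite card_F; case: m. Qed.

Lemma expf_half0 : 0 ^+ m = 0 :> F.
Proof. by rewrite expr0n gtn_eqF ?half_order_gt0. Qed.

(* In characteristic 2 the order of F would be a power of 2, hence even. *)
Lemma two_neq0 : (2 : F) != 0.
Proof.
apply/eqP => two0; have char2 : (2%N \in [pchar F]) by rewrite inE /= two0 eqxx.
have := card_pprimeChar char2; change #|pPrimeCharType char2| with #|F|.
rewrite card_F; have := half_order_gt0.
by case: (logn 2 _) => [|k]; rewrite ?expn0 ?expnS; lia.
Qed.

Lemma one_neq_opp1 : (1 : F) != -1.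
Proof. by rewrite -subr_eq0 opprK -[1 + 1]/(2 : F) two_neq0. Qed.

Lemma card_nonzero : #|[set x : F | x != 0]| = (2 * m)%N.
Proof.
rewrite (_ : [set x : F | x != 0] = [set~ 0]) ?cardsC1 ?card_F //.
by apply/setP => x; rewrite !inE.
Qed.

(* Fermat: x^(q-1) = 1 for x != 0. *)
Lemma expf_half_sqr (x : F) : x != 0 -> (x ^+ m) ^+ 2 = 1.
Proof.
move=> x_nz; apply: (mulfI x_nz).
by rewrite -exprM mulnC -exprS -card_F expf_card mulr1.
Qed.

Lemma expf_half_pm (x : F) : x != 0 -> (x ^+ m == 1) || (x ^+ m == -1).
Proof. by move=> x_nz; rewrite -sqrf_eq1 expf_half_sqr. Qed.

Lemma char_trichotomy (x : F) :
  ((x == 0)%R + (x ^+ m == 1)%R + (x ^+ m == -1)%R)%N = 1%N.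
Proof.
have [->|x_nz] := eqVneq x 0.
  by rewrite expf_half0 eq_sym oner_eq0 eq_sym oppr_eq0 oner_eq0.
by case/orP: (expf_half_pm x_nz) => /eqP->;
  rewrite eqxx ?(negbTE one_neq_opp1) // eq_sym (negbTE one_neq_opp1).
Qed.

(* Each value of the quadratic character is taken exactly m times: by the
   trichotomy q = 1 + #{x^m = 1} + #{x^m = -1}, and each class has at most m
   elements, being the roots of a binomial of degree m. *)
Lemma card_expf_half :
  #|[set x : F | x ^+ m == 1]| = m /\ #|[set x : F | x ^+ m == -1]| = m.
Proof.
have : (\sum_(x : F) ((x == 0)%R + (x ^+ m == 1)%R + (x ^+ m == -1)%R) = \sum_(x : F) 1)%N.
  by apply: eq_bigr => x _; exact: char_trichotomy.
rewrite !big_split /= !sum_nat_pred_card sum1_card card_F.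
rewrite (_ : [set x : F | x == 0] = [set 0]) ?cards1; last by apply/setP => x; rewrite !inE.
have : (#|[set x : F | (x ^+ m == 1)%R]| <= m)%N := card_roots_binomial_le _ half_order_gt0.
have : (#|[set x : F | (x ^+ m == -1)%R]| <= m)%N := card_roots_binomial_le _ half_order_gt0.
set A := #|[set x : F | x ^+ m == 1]|; set B := #|[set x : F | x ^+ m == -1]|.
lia.
Qed.

Lemma sign_neq (u v : F) : (u == 1) || (u == -1) -> (v == 1) || (v == -1) ->
  (u != v) = (u == - v).
Proof.
have one_neq := one_neq_opp1; have opp_neq : (-1 : F) != 1 by rewrite eq_sym.
by do 2!case/orP=> /eqP->; rewrite ?opprK eqxx ?(negbTE one_neq) ?(negbTE opp_neq).
Qed.

Lemma exists_expf_half_opp1 : exists c : F, c ^+ m = -1.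
Proof.
have [_ card_m] := card_expf_half.
have /set0Pn[c] : [set x : F | x ^+ m == -1] != set0.
  by rewrite -card_gt0 card_m half_order_gt0.
by rewrite inE => /eqP; exists c.
Qed.

Lemma sqrt_of_square (y0 : F) : y0 != 0 ->
  [set y : F | y ^+ 2 == y0 ^+ 2] = [set y0; -y0] /\ #|[set y0; -y0]| = 2%N.
Proof.
move=> y0_nz; split; first by apply/setP => y; rewrite !inE eqf_sqr.
rewrite cards2; suff -> : y0 != - y0 by [].
by rewrite -subr_eq0 opprK -mulr2n -mulr_natr mulf_neq0 ?two_neq0.
Qed.

(* Euler's criterion: the m nonzero squares fill up {x | x^m = 1}. *)
Lemma euler_criterion (x : F) : x ^+ m = 1 -> exists2 y, y != 0 & y ^+ 2 = x.
Proof.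
move=> xm1; pose S := [set y ^+ 2 | y in [set y : F | y != 0]].
have fibres : (\sum_(y : F | (y != 0)%R) 1 = \sum_(z in S) 2)%N.
  rewrite (partition_big (fun y : F => y ^+ 2) (fun z => z \in S)) => [|y y_nz]; last first.
    by apply: imset_f; rewrite inE.
  apply: eq_bigr => z /imsetP[y0]; rewrite inE => y0_nz ->.
  have [sqrt_y0 card2] := sqrt_of_square y0_nz.
  rewrite sum1dep_card -[RHS]card2 -sqrt_y0; apply: eq_card => y; rewrite !inE.
  have [->|//] := eqVneq y 0.
  by rewrite /= expr0n eq_sym sqrf_eq0 (negbTE y0_nz).
have card_S : #|S| = m.
  by move: fibres; rewrite sum_nat_const sum1dep_card card_nonzero; lia.
have S_sub : S \subset [set z : F | z ^+ m == 1].
  apply/subsetP => z /imsetP[y]; rewrite inE => y_nz ->.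
  by rewrite inE -exprM mulnC exprM expf_half_sqr.
have [card1 _] := card_expf_half.
have /eqP S_eq : S == [set z : F | z ^+ m == 1].
  by rewrite eqEcard S_sub card1 card_S leqnn.
have : x \in S by rewrite S_eq inE xm1.
by case/imsetP => y; rewrite inE => y_nz ->; exists y.
Qed.

Lemma card_sqrt (x : F) :
  #|[set y : F | y ^+ 2 == x]| = ((x == 0)%R + (x ^+ m == 1)%R * 2)%N.
Proof.
have [->|x_nz] := eqVneq x 0.
  rewrite expf_half0 eq_sym oner_eq0 /= -[RHS](cards1 (0 : F)).
  by apply: eq_card => y; rewrite !inE sqrf_eq0.
case: (boolP (x ^+ m == 1)) => [/eqP/euler_criterion[y0 y0_nz <-] | xm_n1].
  by have [-> ->] := sqrt_of_square y0_nz.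
apply/eqP; rewrite cards_eq0; apply/eqP/setP => y; rewrite !inE.
apply: contraNF xm_n1 => /eqP y2_x.
have y_nz : y != 0 by apply: contra_neq x_nz => y0; rewrite -y2_x y0 expr0n.
by rewrite -y2_x -exprM mulnC exprM expf_half_sqr.
Qed.

(* The conic b^2 = a^2 - 1 has q - 1 points, via u |-> ((u+1/u)/2, (u-1/u)/2). *)
Lemma card_conic :
  #|[set p : F * F | p.2 ^+ 2 == p.1 ^+ 2 - 1]| = (2 * m)%N.
Proof.
have two_nz := two_neq0.
pose g u : F * F := ((u + u^-1) / 2, (u - u^-1) / 2).
have g_sum u : (g u).1 + (g u).2 = u.
  by rewrite /= -mulrDl (_ : _ + _ = u * 2) ?mulfK //; ring.
have g_inj : injective g by move=> u v /(congr1 (fun p => p.1 + p.2)); rewrite !g_sum.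
rewrite -card_nonzero -(card_imset _ g_inj).
apply: eq_card => -[a b]; rewrite inE /=; apply/eqP/imsetP => [conic | [u]].
  have prod1 : (a + b) * (a - b) = 1 by rewrite mulrC -subr_sqr conic; ring.
  have sum_nz : a + b != 0 by apply: contra_eq_neq prod1 => ->; rewrite mul0r eq_sym oner_eq0.
  have inv_sum : (a + b)^-1 = a - b by rewrite -[LHS]mulr1 -prod1 mulKf.
  by exists (a + b); rewrite ?inE // /g inv_sum; congr pair; field.
rewrite inE => u_nz [-> ->]; field.
by rewrite two_nz u_nz.
Qed.

(* Counting the a with prescribed quadratic character of a^2 - 1: summing
   card_sqrt over the conic, and using that a^2 = 1 for exactly two a. *)
Lemma card_char_sqr_sub1 :
  #|[set a : F | (a ^+ 2 - 1) ^+ m == 1]| = (m - 1)%N /\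
  #|[set a : F | (a ^+ 2 - 1) ^+ m == -1]| = m.
Proof.
have card_pm1 : #|[set a : F | a ^+ 2 == 1]| = 2%N.
  rewrite (_ : [set a : F | a ^+ 2 == 1] = [set 1; -1]) ?cards2 ?one_neq_opp1 //.
  by apply/setP => a; rewrite !inE sqrf_eq1.
have conic_fibres : (\sum_(a : F) #|[set b : F | (b ^+ 2 == a ^+ 2 - 1)%R]| = 2 * m)%N.
  rewrite -card_conic -(sum_nat_pred_card (fun p : F * F => p.2 ^+ 2 == p.1 ^+ 2 - 1)).
  rewrite -(pair_bigA _ (fun a b : F => (b ^+ 2 == a ^+ 2 - 1 : nat))) /=.
  by apply: eq_bigr => a _; rewrite sum_nat_pred_card.
have count_all : (\sum_(a : F) 1 = \sum_(a : F) ((a ^+ 2 == 1)%R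
       + ((a ^+ 2 - 1) ^+ m == 1)%R + ((a ^+ 2 - 1) ^+ m == -1)%R))%N.
  by apply: eq_bigr => a _; rewrite -subr_eq0 char_trichotomy.
have card_fibre (a : F) : #|[set b : F | (b ^+ 2 == a ^+ 2 - 1)%R]|
    = ((a ^+ 2 == 1)%R + ((a ^+ 2 - 1) ^+ m == 1)%R + ((a ^+ 2 - 1) ^+ m == 1)%R)%N.
  by rewrite card_sqrt subr_eq0 muln2 -addnn addnA.
rewrite (eq_bigr _ (fun a _ => card_fibre a)) in conic_fibres.
move: conic_fibres count_all.
rewrite !big_split /= !sum_nat_pred_card card_pm1 sum1_card card_F.
set A := #|[set a : F | (a ^+ 2 - 1) ^+ m == 1]|.
set B := #|[set a : F | (a ^+ 2 - 1) ^+ m == -1]|.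
lia.
Qed.

Section PermutationCriterion.

Variables (n : nat) (a : F).
Hypotheses (n_gt0 : (0 < n)%N) (co_nm : coprime n m).

Let f (c : F) := c ^+ n * (c ^+ m + a).
Let s : F := (-1) ^+ n.

Lemma binom_at0 : f 0 = 0.
Proof. by rewrite /f expr0n gtn_eqF // mul0r. Qed.

Lemma binom_expf_half (c : F) : f c ^+ m = (c ^+ m) ^+ n * (c ^+ m + a) ^+ m.
Proof. by rewrite exprMn -!exprM mulnC. Qed.

Lemma binom_inj_on_class (c d : F) : c != 0 -> c ^+ m = d ^+ m ->
  c ^+ m + a != 0 -> f c = f d -> c = d.
Proof.
move=> c_nz eq_m class_nz fc_fd.
have eq_n : c ^+ n = d ^+ n by apply: (mulIf class_nz); move: fc_fd; rewrite /f -eq_m.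
exact: expf_coprime_inj n_gt0 co_nm c_nz eq_n eq_m.
Qed.

Lemma binom_eq0 (c : F) : a + 1 != 0 -> a - 1 != 0 -> (f c == 0) = (c == 0).
Proof.
move=> ap1_nz am1_nz; have [->|c_nz] := eqVneq c 0; first by rewrite binom_at0 eqxx.
rewrite mulf_eq0 expf_eq0 (negbTE c_nz) andbF /=.
by case/orP: (expf_half_pm c_nz) => /eqP->; rewrite addrC ?(negbTE ap1_nz) ?(negbTE am1_nz).
Qed.

(* If f is injective then a != +-1 (else f has a second zero), and the two
   classes must have distinct image values: otherwise the 2m nonzero elements
   would be mapped injectively into the at most m roots of y^m = (a+1)^m. *)
Lemma binom_inj_necessary : injective f ->
  [/\ a + 1 != 0, a - 1 != 0 & (a + 1) ^+ m != s * (a - 1) ^+ m].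
Proof.
move=> f_inj; have ap1_nz : a + 1 != 0.
  apply: contra_neq (oner_neq0 F) => ap1_0; apply: f_inj.
  by rewrite binom_at0 /f !expr1n mul1r addrC ap1_0.
have am1_nz : a - 1 != 0.
  apply/eqP => am1_0; have [c cm] := exists_expf_half_opp1.
  suff c0 : c = 0 by move: cm; rewrite c0 expf_half0 => /eqP; rewrite eq_sym oppr_eq0 oner_eq0.
  by apply: f_inj; rewrite binom_at0 /f cm addrC am1_0 mulr0.
split=> //; apply/negP => /eqP values_eq.
have image_sub : f @: [set x : F | x != 0] \subset [set y | y ^+ m == (a + 1) ^+ m].
  apply/subsetP => y /imsetP[c]; rewrite inE => c_nz ->.
  rewrite inE binom_expf_half.
  by case/orP: (expf_half_pm c_nz) => /eqP->; rewrite ?expr1n ?mul1r addrC // values_eq.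
have := leq_trans (subset_leq_card image_sub) (card_roots_binomial_le _ half_order_gt0).
by rewrite card_imset // card_nonzero -{2}[m]mul1n leq_pmul2r ?half_order_gt0.
Qed.

(* Conversely, under these conditions f maps nonzero elements to nonzero
   elements, f(c) = f(d) forces c and d into the same class (the class values
   f(c)^m differ), and f is injective on each class. *)
Lemma binom_inj_sufficient :
  [/\ a + 1 != 0, a - 1 != 0 & (a + 1) ^+ m != s * (a - 1) ^+ m] -> injective f.
Proof.
move=> [ap1_nz am1_nz values_neq] c d fc_fd.
have [c0|c_nz] := eqVneq c 0.
  by rewrite c0; apply/esym/eqP; rewrite -(binom_eq0 d) // -fc_fd c0 binom_at0.
have d_nz : d != 0 by rewrite -(binom_eq0 d) // -fc_fd binom_eq0.
have class_eq : c ^+ m = d ^+ m.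
  have := congr1 (fun y => y ^+ m) fc_fd; rewrite /= !binom_expf_half.
  case/orP: (expf_half_pm c_nz) => /eqP->; case/orP: (expf_half_pm d_nz) => /eqP-> //;
    rewrite expr1n mul1r !(addrC _ a) => values_eq; case/eqP: values_neq => //.
apply: binom_inj_on_class class_eq _ fc_fd => //.
by case/orP: (expf_half_pm c_nz) => /eqP->; rewrite addrC.
Qed.

Lemma binom_criterion_char :
  [&& a + 1 != 0, a - 1 != 0 & (a + 1) ^+ m != s * (a - 1) ^+ m] =
  ((a ^+ 2 - 1) ^+ m == - s).
Proof.
have s_pm : (s == 1) || (s == -1) by rewrite /s -signr_odd; case: (odd n); rewrite eqxx ?orbT.
have fact_a : a ^+ 2 - 1 = (a + 1) * (a - 1) by ring.
have [ap1_0|ap1_nz] := eqVneq (a + 1) 0.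
  by rewrite fact_a ap1_0 mul0r expf_half0 /= eq_sym oppr_eq0 /s signr_eq0.
have [am1_0|am1_nz] := eqVneq (a - 1) 0.
  by rewrite fact_a am1_0 mulr0 expf_half0 /= eq_sym oppr_eq0 /s signr_eq0.
have prod_nz : a ^+ 2 - 1 != 0 by rewrite fact_a mulf_neq0.
have values_eqE : ((a + 1) ^+ m == s * (a - 1) ^+ m) = ((a ^+ 2 - 1) ^+ m == s).
  rewrite fact_a exprMn -(inj_eq (mulIf (expf_neq0 m am1_nz))) -mulrA -expr2.
  by rewrite expf_half_sqr ?mulr1.
by rewrite /= values_eqE (sign_neq (expf_half_pm prod_nz) s_pm).
Qed.

End PermutationCriterion.

End OddOrderField.

Unset Implicit Arguments.

(* q = #|F|; "q a power of an odd prime" <=> F finite field of odd order.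
   The count (q - 2 + (-1)^n)/2 is stated multiplied by 2, in int. *)
Theorem theorem3p2 (F : finFieldType) (n : nat)
    (hodd : odd #|F|) (hn : (0 < n)%N)
    (hgcd : coprime n ((#|F| - 1) %/ 2)) :
  (#|[set a : F | perm_polyb ('X^n * ('X^((#|F| - 1) %/ 2) + a%:P))]|%:Z * 2
     = #|F|%:Z - 2 + (-1) ^+ n)%R.
Proof.
set m := ((#|F| - 1) %/ 2)%N in hgcd *.
have card_F : #|F| = (2 * m).+1.
  have := odd_double_half #|F|; rewrite hodd -divn2 /m.
  have := finNzRing_gt1 F; lia.
have perm_set : [set a : F | perm_polyb ('X^n * ('X^m + a%:P))] =
                [set a : F | (a ^+ 2 - 1) ^+ m == - (-1) ^+ n].
  apply/setP => a; rewrite !inE -(binom_criterion_char card_F n a).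
  have eval_binom : (fun c => ('X^n * ('X^m + a%:P)).[c]) =1
                    (fun c => c ^+ n * (c ^+ m + a)) by move=> c; rewrite !hornerE.
  apply/perm_polybP/and3P => [f_inj | /(binom_inj_sufficient card_F hn hgcd) f_inj].
    by apply: (binom_inj_necessary card_F hn); exact: eq_inj f_inj eval_binom.
  exact: eq_inj f_inj (fsym eval_binom).
have [card_p1 card_m1] := card_char_sqr_sub1 card_F.
have m_gt0 := half_order_gt0 card_F.
rewrite perm_set card_F -(signr_odd F n) -(signr_odd int n).
case: (odd n); rewrite ?expr1 ?opprK ?card_p1 ?expr0 ?card_m1; lia.
Qed.
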